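(* Let $f(t)\in\mathbb{Q}[t]$ be irreducible of degree $3$. Then there are infinitely many quadratic polynomials $g(y)\in\mathbb{Q}[y]$ for which $f(g(y))$ is reducible in $\mathbb{Q}[y]$, and which are pairwise distinct under transformations replacing $y$ by a polynomial in $y$ (that is, no one of them is obtained from another by substituting a polynomial $p(y)\in\mathbb{Q}[y]$ for $y$). *)

From HB Require Import structures.
From mathcomp Require Export all_boot all_order all_algebra.
Set Implicit Arguments. Unset Strict Implicit. Unset Printing Implicit Defensive.
Import GRing.Theory.
Local Open Scope ring_scope.

Definition reducible_poly (R : idomainType) (p : {poly R}) : Prop :=
  (1 < size p)%N /\ ~ irreducible_poly p.

From mathcomp Require Import all_boot all_order all_algebra.
From mathcomp Require Import ring zify.
Set Implicit Arguments. Unset Strict Implicit. Unset Printing Implicit Defensive.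
Import GRing.Theory Num.Theory.
Local Open Scope ring_scope.

(* Write f = a (t^3 + p2 t^2 + p1 t + p0) and, for rational t, put D(t) = 4 (f(t)/a),
   A(t) = (t^2 - p1)^2 - 8 p0 t - 4 p0 p2 and g_t(y) = (A(t) - y^2) / D(t).  With
   h = y^2 - A(t) and b = -D(t), the homogenised cubic h^3 + p2 b h^2 + p1 b^2 h + p0 b^3
   factors as -P(y) P(-y) for an explicit monic cubic P, so f(g_t(y)) is a constant times
   a product of two cubics.  D(t) never vanishes because f has no rational root.
   If g_s = g_t o p then p is linear without constant term, so g_s and g_t have the same
   constant term A/D; as A - c D is a nonzero quartic for every c, the values A(m)/D(m),
   m in N, are infinitely many, and choosing m with pairwise distinct values gives the
   required family. *)

Section IrreduciblePoly.
Variable R : idomainType.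
Implicit Types p q : {poly R}.

Lemma reducible_polyM p q : (1 < size p)%N -> (1 < size q)%N -> reducible_poly (p * q).
Proof.
move=> p_gt1 q_gt1.
have [nz_p nz_q] : p != 0 /\ q != 0 by split; rewrite -size_poly_gt0 ltnW.
have size_pq : size (p * q) = (size p + size q).-1 by rewrite size_mul.
split=> [|[_ irr_pq]]; first by rewrite size_pq; lia.
have := eqp_size (irr_pq p _ (dvdp_mulIl p q)).
by rewrite size_pq; lia.
Qed.

Lemma irredp_noroot p x : irreducible_poly p -> (2 < size p)%N -> ~~ root p x.
Proof.
move=> irr_p p_gt2; apply/negP; rewrite -dvdp_XsubCl => /(irr_p _ _)/eqp_size.
by rewrite size_XsubC => /(_ isT) p_eq2; rewrite -p_eq2 in p_gt2.
Qed.

End IrreduciblePoly.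

Section EvenQuadratic.
Variable R : idomainType.
Implicit Types (k c : R) (p : {poly R}).

Lemma size_even_quadratic k c : k != 0 -> size (k%:P * 'X^2 + c%:P) = 3%N.
Proof.
move=> nz_k; rewrite size_polyDl size_Cmul ?size_polyXn //.
exact: leq_ltn_trans (size_polyC_leq1 c) _.
Qed.

Lemma size2_polyE p : size p = 2%N -> p = (p`_1)%:P * 'X + (p`_0)%:P.
Proof.
move=> size_p; apply/polyP => -[|[|i]]; rewrite !coefE /= ?(mulr0, mulr1, addr0, add0r) //.
by rewrite nth_default ?size_p.
Qed.

Hypothesis two_neq0 : 2%:R != 0 :> R.

Lemma even_quadratic_comp_eq k1 c1 k2 c2 p : k1 != 0 -> k2 != 0 ->
  k1%:P * 'X^2 + c1%:P = (k2%:P * 'X^2 + c2%:P) \Po p -> c1 = c2.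
Proof.
move=> nz_k1 nz_k2 comp_eq.
have size_p : size p = 2%N.
  have := size_comp_poly (k2%:P * 'X^2 + c2%:P) p.
  rewrite -comp_eq !size_even_quadratic //; case: (size p) => [|[|n]] //=; lia.
have nz_a : p`_1 != 0.
  have : lead_coef p != 0 by rewrite lead_coef_eq0 -size_poly_eq0 size_p.
  by rewrite lead_coefE size_p.
move: comp_eq; rewrite (size2_polyE size_p).
set a := p`_1; set b := p`_0.
rewrite comp_polyD comp_polyM comp_polyC comp_Xn_poly comp_polyC.
have -> : k2%:P * (a%:P * 'X + b%:P) ^+ 2 + c2%:P =
  (k2 * a ^+ 2)%:P * 'X^2 + (2 * k2 * a * b)%:P * 'X + (k2 * b ^+ 2 + c2)%:P by ring.
move=> eq_quad.
have := congr1 (coefp 1) eq_quad; have := congr1 (coefp 0) eq_quad.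
rewrite /= !coefE /= !(mulr0, mulr1, addr0, add0r) => -> /esym/eqP.
rewrite !mulf_eq0 (negPf two_neq0) (negPf nz_k2) (negPf nz_a) /= => /eqP ->.
by rewrite expr0n mulr0 add0r.
Qed.

End EvenQuadratic.

Section Cubic.
Variable F : fieldType.

Definition cubic (c0 c1 c2 : F) : {poly F} := 'X^3 + c2%:P * 'X^2 + c1%:P * 'X + c0%:P.

Lemma size_cubic c0 c1 c2 : size (cubic c0 c1 c2) = 4%N.
Proof.
have -> : cubic c0 c1 c2 = Poly [:: c0; c1; c2; 1] by rewrite /cubic /= !cons_poly_def; ring.
by rewrite (PolyK (c := 0)) //= oner_eq0.
Qed.

Lemma size4_polyE (f : {poly F}) : size f = 4%N ->
  f = (lead_coef f)%:P * cubic (f`_0 / lead_coef f) (f`_1 / lead_coef f) (f`_2 / lead_coef f).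
Proof.
move=> size_f; set a := lead_coef f.
have nz_a : a != 0 by rewrite lead_coef_eq0 -size_poly_eq0 size_f.
apply/polyP => -[|[|[|[|i]]]]; rewrite coefCM /cubic !coefE /= !(mulr0, mulr1, addr0, add0r).
1-3: by rewrite mulrC divfK.
- by rewrite /a lead_coefE size_f.
- by rewrite nth_default ?size_f.
Qed.

Variables p0 p1 p2 : F.
Local Notation f := (cubic p0 p1 p2).

Definition split_shift : {poly F} :=
  'X^4 - (2 * p1)%:P * 'X^2 - (8 * p0)%:P * 'X + (p1 ^+ 2 - 4 * p0 * p2)%:P.
Definition split_scale : {poly F} := 4%:P * f.

Definition splitting_quadratic (t : F) : {poly F} :=
  (- split_scale.[t]^-1)%:P * 'X^2 + (split_shift.[t] / split_scale.[t])%:P.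

Definition split_factor (e t : F) : {poly F} :=
  cubic (e * (t ^+ 6 + 2 * p2 * t ^+ 5 + 5 * p1 * t ^+ 4 - 5 * p1 ^+ 2 * t ^+ 2
              - 2 * p1 ^+ 2 * p2 * t - p1 ^+ 3 + 20 * p0 * t ^+ 3 + 20 * p0 * p2 * t ^+ 2
              + 8 * p0 * p2 ^+ 2 * t - 4 * p0 * p1 * t + 4 * p0 * p1 * p2 - 8 * p0 ^+ 2))
        (3 * t ^+ 4 + 4 * p2 * t ^+ 3 + 6 * p1 * t ^+ 2 - p1 ^+ 2 + 12 * p0 * t + 4 * p0 * p2)
        (e * (3 * t ^+ 2 + 2 * p2 * t + p1)).

Lemma split_factorization t :
  let h := 'X^2 - split_shift.[t]%:P in let b := - split_scale.[t] in
  h ^+ 3 + (p2 * b)%:P * h ^+ 2 + (p1 * b ^+ 2)%:P * h + (p0 * b ^+ 3)%:P =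
  split_factor 1 t * split_factor (-1) t.
Proof.
move=> h b; rewrite {}/h {}/b /split_factor /split_shift /split_scale /cubic.
by rewrite !(hornerD, hornerN, hornerM, hornerC, hornerX, hornerXn); ring.
Qed.

Lemma cubic_comp_splitting_quadratic t : split_scale.[t] != 0 ->
  f \Po splitting_quadratic t =
  (- split_scale.[t] ^- 3)%:P * (split_factor 1 t * split_factor (-1) t).
Proof.
move=> nz_D; rewrite -split_factorization.
set A := split_shift.[t]; set b := - split_scale.[t]; set k := b^-1.
have kb : k * b = 1 by rewrite mulVf // oppr_eq0.
have -> : splitting_quadratic t = k%:P * ('X^2 - A%:P).
  by rewrite /splitting_quadratic /k /b invrN; ring.
have -> : - split_scale.[t] ^- 3 = k ^+ 3.
  by rewrite /k /b; field; rewrite oppr_eq0 nz_D.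
have kbP : k%:P * b%:P = 1 :> {poly F} by rewrite -polyCM kb.
set h := 'X^2 - A%:P.
rewrite /cubic !comp_polyD !comp_polyM !comp_polyC comp_polyX.
transitivity ((k%:P * h) ^+ 3 + p2%:P * (k%:P * b%:P) * (k%:P * h) ^+ 2
  + p1%:P * (k%:P * b%:P) ^+ 2 * (k%:P * h) + p0%:P * (k%:P * b%:P) ^+ 3).
  by rewrite kbP; ring.
by ring.
Qed.

Lemma reducible_comp_splitting_quadratic a t : a != 0 -> split_scale.[t] != 0 ->
  reducible_poly ((a%:P * f) \Po splitting_quadratic t).
Proof.
move=> nz_a nz_D; rewrite comp_polyM comp_polyC cubic_comp_splitting_quadratic //.
rewrite !mulrA -polyCM; apply: reducible_polyM; rewrite ?size_Cmul ?size_cubic //.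
by rewrite mulf_neq0 // oppr_eq0 invr_eq0 expf_neq0.
Qed.

Lemma size_splitting_quadratic t : split_scale.[t] != 0 ->
  size (splitting_quadratic t) = 3%N.
Proof. by move=> nz_D; rewrite size_even_quadratic // oppr_eq0 invr_eq0. Qed.

Lemma splitting_quadratic_comp_eq s t p : 2%:R != 0 :> F ->
  split_scale.[s] != 0 -> split_scale.[t] != 0 ->
  splitting_quadratic s = splitting_quadratic t \Po p ->
  split_shift.[s] / split_scale.[s] = split_shift.[t] / split_scale.[t].
Proof.
by move=> two_neq0 nz_Ds nz_Dt; apply: even_quadratic_comp_eq; rewrite // oppr_eq0 invr_eq0.
Qed.

Lemma split_shift_neq_scale c : split_shift != c *: split_scale.
Proof.
apply/eqP => /(congr1 (coefp 4)) /eqP.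
by rewrite /= /split_shift /split_scale /cubic !coefE /= !(mulr0, addr0, subr0) oner_eq0.
Qed.

End Cubic.

Section NatValues.
Variable F : numFieldType.
Implicit Types p A D : {poly F}.

Lemma exists_nat_nonroot p : p != 0 -> exists m : nat, ~~ root p m%:R.
Proof.
move=> nz_p; pose rs := [seq m%:R | m <- iota 0 (size p)] : seq F.
suff /allPn[_ /mapP[m _ ->] m_nroot] : ~~ all (root p) rs by exists m.
apply: contra nz_p => /roots_geq_poly_eq0 p_eq0; apply/eqP/p_eq0.
  by rewrite map_inj_uniq ?iota_uniq //; apply: mulrIn; rewrite oner_eq0.
by rewrite size_map size_iota.
Qed.

Lemma exists_nat_ratio_notin A D :
  (forall c, A != c *: D) -> (forall m : nat, D.[m%:R] != 0) ->
  forall L : seq F, exists m : nat, A.[m%:R] / D.[m%:R] \notin L.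
Proof.
move=> A_nprop nz_D L.
have nz_prod : \prod_(c <- L) (A - c *: D) != 0.
  by rewrite prodf_seq_neq0; apply/allP => c _; rewrite subr_eq0 A_nprop.
have [m m_nroot] := exists_nat_nonroot nz_prod; exists m.
apply: contra m_nroot => L_ratio.
rewrite rootE horner_prod prodf_seq_eq0; apply/hasP.
exists (A.[m%:R] / D.[m%:R]) => //=.
by rewrite hornerD hornerN hornerZ divfK ?subrr.
Qed.

End NatValues.

Lemma injective_subseq (T : eqType) (phi : nat -> T) :
  (forall L : seq T, exists m, phi m \notin L) ->
  exists s : nat -> nat, injective (phi \o s).
Proof.
move=> avoid; pose pick L := xchoose (avoid L).
pose prefix n := iter n (fun L => phi (pick L) :: L) [::].
exists (fun n => pick (prefix n)).
have in_prefix i j : (i < j)%N -> phi (pick (prefix i)) \in prefix j.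
  elim: j => // j IHj; rewrite ltnS leq_eqVlt in_cons => /predU1P[-> | /IHj ->].
    by rewrite eqxx.
  by rewrite orbT.
have fresh j i : (i < j)%N -> phi (pick (prefix j)) != phi (pick (prefix i)).
  by move=> lt_ij; apply: contraNneq (xchooseP (avoid (prefix j))) => ->; exact: in_prefix.
move=> i j /= /eqP; case: (ltngtP i j) => // [lt_ij | lt_ji].
  by rewrite eq_sym (negPf (fresh _ _ lt_ij)).
by rewrite (negPf (fresh _ _ lt_ji)).
Qed.

Unset Implicit Arguments.
Theorem theorem3p2 (f : {poly rat}) :
  irreducible_poly f -> size f = 4%N ->
  exists G : nat -> {poly rat},
    (forall n, size (G n) = 3%N) /\
    (forall n, reducible_poly (f \Po G n)) /\
    (forall i j, i <> j -> forall p : {poly rat}, G i <> G j \Po p).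
Proof.
move=> irr_f size_f; have f_eq := size4_polyE size_f.
set p0 := f`_0 / _ in f_eq; set p1 := f`_1 / _ in f_eq; set p2 := f`_2 / _ in f_eq.
have nz_D t : (split_scale p0 p1 p2).[t] != 0.
  rewrite hornerCM mulf_neq0 //; apply: contra (irredp_noroot t irr_f _) => [c_root|].
    by rewrite f_eq rootE hornerCM (eqP c_root) mulr0.
  by rewrite size_f.
have [s inj_s] := injective_subseq
  (exists_nat_ratio_notin (@split_shift_neq_scale _ p0 p1 p2) (fun m => nz_D m%:R)).
exists (fun n => splitting_quadratic p0 p1 p2 (s n)%:R); split; [|split].
- by move=> n; rewrite size_splitting_quadratic.
- move=> n; rewrite {1}f_eq; apply: reducible_comp_splitting_quadratic => //.
  by rewrite lead_coef_eq0 -size_poly_eq0 size_f.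
move=> i j ne_ij p /splitting_quadratic_comp_eq eq_ratio; apply/ne_ij/inj_s.
exact: eq_ratio.
Qed.
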